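(* One-step MinPop Matching can be computed recursively via failure links and failure pops: $$(h(u,c),H(u,c)) = \begin{cases}(\mathrm{null},[\,]) & \text{if } u=\mathrm{null},\\ (\delta(u,c),[\,]) & \text{elif } \delta(u,c)\neq\mathrm{null},\\ \big(h(f(u),c),\; F(u)+H(f(u),c)\big) & \text{otherwise.}\end{cases}$$
   Context: Setting: WordPiece tokenization with vocabulary $V$, suffix indicator string $\sharp$ (e.g. ''##'', possibly empty). A trie is built from $V$ with root $r$ and node $r_\sharp$ representing $\sharp$; it may be augmented with nodes for $\sqcup$ and $\sharp\sqcup$, where $\sqcup$ is a whitespace character not in the vocabulary alphabet (not added to $V$). $\delta(u,c)$ is the child of $u$ along edge $c$, or null. $\chi_v$ is the string of node $v$; $\gamma_w$ is the node representing $w$, or null. Length of $w$: $|w|$ if $w$ does not start with $\sharp$, else $|w|-|\sharp|$. $p_w$: longest (by this length) non-empty prefix $w'\in V$, $w'\notin\{\varepsilon,\sharp\}$, of $w$, required to start with $\sharp$ if $w$ does; $p_w=\varepsilon$ if none, and $p_\sharp=\varepsilon$. $q_w:=\sharp w''$ where $w=p_w w''$. MinPop Matching: $(g(w),G(w)) := (\gamma_w,[\,])$ if $\gamma_w\neq\mathrm{null}$; else $(\mathrm{null},[\,])$ if $p_w=\varepsilon$; else $(g(q_w),[p_w]+G(q_w))$. One-step: $(h(u,c),H(u,c)) := (\mathrm{null},[\,])$ if $u=\mathrm{null}$, else $(g(\chi_u c),G(\chi_u c))$. Failure link and failure pops of node $v$, with $w=\chi_v$: $(f(v),F(v)) :=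 (\mathrm{null},[\,])$ if $p_w=\varepsilon$, else $(g(q_w),\,[p_w]+G(q_w))$. *)

(* Strings are sequences over an eqType alphabet Sigma;
   a trie node is identified with the string it represents (Some w), and
   null is None. *)
From mathcomp Require Import all_boot.
Set Implicit Arguments. Unset Strict Implicit. Unset Printing Implicit Defensive.

Section WordPiece.
Variables (Sigma : eqType)
          (V : seq (seq Sigma))
          (sharp : seq Sigma)     (* suffix indicator, possibly empty *)
          (sp : Sigma)
          (aug : bool).

Definition starts_sharp (w : seq Sigma) : bool := prefix sharp w.

Definition wlen (w : seq Sigma) : nat :=
  if starts_sharp w then size w - size sharp else size w.

(* nodes of the trie built from V, with the node r_sharp (and hence the path
   to it), possibly augmented with the nodes for ⊔ and ♯⊔ *)
Definition is_node (w : seq Sigma) : bool :=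
  [|| has (prefix w) V, prefix w sharp
    | aug && ((w == [:: sp]) || (w == sharp ++ [:: sp]))].

Definition gamma (w : seq Sigma) : option (seq Sigma) :=
  if is_node w then Some w else None.

Definition delta (s : seq Sigma) (c : Sigma) : option (seq Sigma) :=
  gamma (rcons s c).

Definition pcand (w x : seq Sigma) : bool :=
  [&& x \in V, x != [::], x != sharp, prefix x w
    & starts_sharp w ==> starts_sharp x].

Definition pw (w : seq Sigma) : seq Sigma :=
  foldl (fun best x => if wlen best < wlen x then x else best) [::]
        [seq x <- [seq take k w | k <- iota 0 (size w).+1] | pcand w x].

Definition qw (w : seq Sigma) : seq Sigma := sharp ++ drop (size (pw w)) w.

(* MinPop Matching (g(w), G(w)), computed with fuel; the recursion strictly
   decreases wlen, so fuel (size w).+1 is always sufficient. *)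
Fixpoint minpop_fuel (n : nat) (w : seq Sigma)
  : option (seq Sigma) * seq (seq Sigma) :=
  match n with
  | 0 => (None, [::])
  | n'.+1 =>
    if gamma w is Some v then (Some v, [::])
    else if pw w == [::] then (None, [::])
    else let r := minpop_fuel n' (qw w) in (r.1, pw w :: r.2)
  end.

Definition minpop (w : seq Sigma) := minpop_fuel (size w).+1 w.
Definition g (w : seq Sigma) := (minpop w).1.
Definition G (w : seq Sigma) := (minpop w).2.

Definition hH (u : option (seq Sigma)) (c : Sigma)
  : option (seq Sigma) * seq (seq Sigma) :=
  if u is Some s then (g (rcons s c), G (rcons s c)) else (None, [::]).

Definition fF (s : seq Sigma) : option (seq Sigma) * seq (seq Sigma) :=
  if pw s == [::] then (None, [::]) else (g (qw s), pw s :: G (qw s)).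

End WordPiece.

(* If χ_u c is not a trie node, appending c to χ_u changes neither the
   admissible prefixes (the only new prefix, χ_u c itself, is not in V, whose
   words are all nodes) nor whether the word starts with ♯ (♯ is a node), so
   p_{wc} = p_w and q_{wc} = q_w c.  Moreover MinPop matching is compositional:
   g(wc), G(wc) arise from the match g(w), G(w) of w followed by one step along
   c from g(w), since the recursion of g through q_w commutes with appending c.
   Together with the definition of f and F this gives the recursion for h, H. *)
From Pilot Require Import Defs.
From mathcomp Require Import all_boot zify.
Set Implicit Arguments. Unset Strict Implicit. Unset Printing Implicit Defensive.

Lemma prefix_rconsE (T : eqType) (s w : seq T) c :
  prefix s (rcons w c) = (s == rcons w c) || prefix s w.
Proof.
elim: w s => [|a w IH] [|b s] //=; rewrite eqseq_cons.
  by case: s => [|x s] /=; rewrite ?andbT ?andbF orbF.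
by rewrite IH andb_orr.
Qed.

Section MinPop.
Variables (Sigma : eqType) (V : seq (seq Sigma)) (sharp : seq Sigma)
          (sp : Sigma) (aug : bool).

Notation starts_sharp := (starts_sharp sharp).
Notation wlen := (wlen sharp).
Notation is_node := (is_node V sharp sp aug).
Notation gamma := (gamma V sharp sp aug).
Notation pcand := (pcand V sharp).
Notation pw := (pw V sharp).
Notation qw := (qw V sharp).
Notation minpop_fuel := (minpop_fuel V sharp sp aug).
Notation minpop := (minpop V sharp sp aug).
Notation g := (g V sharp sp aug).
Notation G := (G V sharp sp aug).
Notation hH := (hH V sharp sp aug).

Lemma is_node_rcons w c : is_node (rcons w c) -> is_node w.
Proof.
case/or3P => [/hasP [x xV wcx] | wc_sharp | /andP [-> /orP [] /eqP e]].
- apply/orP; left; apply/hasP; exists x => //.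
  exact: prefix_trans (prefix_rcons w c) wcx.
- by apply/or3P/Or32/(prefix_trans (prefix_rcons w c)).
- by case: w e => [|a [|]] //= _; rewrite /Defs.is_node prefix0s orbT.
- by move: e; rewrite cats1 => /rcons_inj [-> _]; rewrite /Defs.is_node prefix_refl orbT.
Qed.

Lemma starts_sharp_rcons w c : ~~ is_node (rcons w c) ->
  starts_sharp (rcons w c) = starts_sharp w.
Proof.
move=> nwc; rewrite /starts_sharp prefix_rconsE; case: eqP => //= sharpE.
by move: nwc; rewrite /Defs.is_node -sharpE prefix_refl orbT.
Qed.

Lemma pcand_rcons w c x : ~~ is_node (rcons w c) -> prefix x w ->
  pcand (rcons w c) x = pcand w x.
Proof.
move=> nwc xw; rewrite /Defs.pcand starts_sharp_rcons //.
by rewrite xw (prefix_trans xw (prefix_rcons w c)).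
Qed.

Lemma pw_rcons w c : ~~ is_node (rcons w c) -> pw (rcons w c) = pw w.
Proof.
move=> nwc; rewrite /Defs.pw size_rcons -addn1 iotaD map_cat filter_cat.
have -> : [seq take k (rcons w c) | k <- iota (0 + (size w).+1) 1] = [:: rcons w c].
  by rewrite /= add0n -(size_rcons w c) take_size.
have -> : [seq x <- [:: rcons w c] | pcand (rcons w c) x] = [::].
  rewrite /= /Defs.pcand; case: (boolP (rcons w c \in V)) => //= wcV; case/negP: nwc.
  by apply/orP; left; apply/hasP; exists (rcons w c); rewrite ?prefix_refl.
have -> : [seq take k (rcons w c) | k <- iota 0 (size w).+1] =
          [seq take k w | k <- iota 0 (size w).+1].
  by apply/eq_in_map => k; rewrite mem_iota ltnS => le_kw; rewrite -cats1 takel_cat.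
rewrite cats0; congr foldl; apply: eq_in_filter => _ /mapP [k _ ->].
exact: pcand_rcons (prefix_take w k).
Qed.

Lemma pw_spec w : pw w = [::] \/ pcand w (pw w).
Proof.
pose ok x := x = [::] \/ pcand w x; rewrite -/(ok _) /Defs.pw.
have : all (pcand w) [seq x <- [seq take k w | k <- iota 0 (size w).+1] | pcand w x].
  exact: filter_all.
have : ok [::] by left.
elim: (filter _ _) [::] => [|x l IH] best //= best_ok /andP [wx l_ok].
by apply: IH => //; case: ifP => _; [right|].
Qed.

Lemma size_pw w : size (pw w) <= size w.
Proof. by case: (pw_spec w) => [->|/and5P [_ _ _ /size_prefix]]. Qed.

Lemma qw_rcons w c : ~~ is_node (rcons w c) -> qw (rcons w c) = rcons (qw w) c.
Proof. by move=> nwc; rewrite /Defs.qw pw_rcons // drop_rcons ?size_pw // rcons_cat. Qed.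

Lemma wlen_size w : wlen w <= size w.
Proof. by rewrite /Defs.wlen; case: ifP => // _; apply: leq_subr. Qed.

Lemma wlen_qw w : pw w != [::] -> wlen (qw w) < wlen w.
Proof.
case: (pw_spec w) => [-> //|/and5P [_ pw_nil pw_sharp pw_w ss] _].
have le_pw := size_prefix pw_w.
have pw_gt0 : 0 < size (pw w) by case: (pw w) pw_nil.
rewrite /Defs.wlen /Defs.qw /starts_sharp prefix_prefix size_cat size_drop.
case: ifP ss => [ss_w /implyP /(_ ss_w) ss_pw | _ _]; last by lia.
suff : size sharp < size (pw w) by lia.
rewrite ltn_neqAle (size_prefix ss_pw) andbT; apply: contra pw_sharp => /eqP sz.
by move: ss_pw; rewrite /Defs.starts_sharp prefixE sz take_size.
Qed.

Lemma minpop_fuel_stable n m w :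
  wlen w < n -> wlen w < m -> minpop_fuel n w = minpop_fuel m w.
Proof.
elim: n m w => [|n IH] [|m] w //= lt_wn lt_wm.
case: (gamma w) => //; case: eqP => // /eqP /wlen_qw lt_q.
by rewrite (IH m) // (leq_trans lt_q).
Qed.

Lemma minpopE w : minpop w =
  if gamma w is Some v then (Some v, [::])
  else if pw w == [::] then (None, [::])
  else (g (qw w), pw w :: G (qw w)).
Proof.
rewrite {1}/Defs.minpop /=; case: (gamma w) => //; case: eqP => // /eqP /wlen_qw lt_q.
have lt_qsize : wlen (qw w) < size w := leq_trans lt_q (wlen_size w).
rewrite /Defs.g /Defs.G /Defs.minpop.
by rewrite (@minpop_fuel_stable (size w) (size (qw w)).+1) // ltnS wlen_size.
Qed.

Lemma minpop_node w : is_node w -> minpop w = (Some w, [::]).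
Proof. by move=> nw; rewrite minpopE /Defs.gamma nw. Qed.

Lemma minpop_rcons w c :
  minpop (rcons w c) = ((hH (g w) c).1, G w ++ (hH (g w) c).2).
Proof.
have [n] := ubnP (wlen w); elim: n w => // n IH w /ltnSE le_wn.
case: (boolP (is_node w)) => [nw | nw].
  by rewrite /Defs.g /Defs.G (minpop_node nw) /= /Defs.g /Defs.G; case: (minpop _).
have nwc : ~~ is_node (rcons w c) by apply: contra nw; apply: is_node_rcons.
rewrite /Defs.g /Defs.G [minpop w]minpopE [minpop (rcons w c)]minpopE.
rewrite /Defs.gamma (negbTE nw) (negbTE nwc) pw_rcons // qw_rcons //.
case: eqP => // /eqP /wlen_qw lt_q.
by rewrite /Defs.g /Defs.G IH // (leq_trans lt_q).
Qed.

Lemma g_rcons w c : g (rcons w c) = (hH (g w) c).1.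
Proof. by rewrite {1}/Defs.g minpop_rcons. Qed.

Lemma G_rcons w c : G (rcons w c) = G w ++ (hH (g w) c).2.
Proof. by rewrite {1}/Defs.G minpop_rcons. Qed.

End MinPop.

Theorem lemma4 (Sigma : eqType) (V : seq (seq Sigma)) (sharp : seq Sigma)
  (sp : Sigma) (aug : bool)
  (Hsp_V : all (fun w => sp \notin w) V) (Hsp_sharp : sp \notin sharp)
  (u : option (seq Sigma))
  (Hu : if u is Some s then is_node V sharp sp aug s else true)
  (c : Sigma) :
  hH V sharp sp aug u c =
  match u with
  | None => (None, [::])
  | Some s =>
      match delta V sharp sp aug s c with
      | Some v => (Some v, [::])
      | None =>
          let fu := fF V sharp sp aug s in
          ((hH V sharp sp aug fu.1 c).1,
           fu.2 ++ (hH V sharp sp aug fu.1 c).2)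
      end
  end.
Proof.
case: u {Hu} => [s|] //=; rewrite /delta /Defs.gamma.
case: (boolP (is_node V sharp sp aug (rcons s c))) => [nsc | nsc].
  by rewrite /g /G minpop_node.
rewrite /g /G minpopE /Defs.gamma (negbTE nsc) (pw_rcons nsc) (qw_rcons nsc) /fF.
by case: eqP => // _; rewrite /= g_rcons G_rcons.
Qed.
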